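(* Let $n\in\mathbf{N}$ and $A\subset[n]$ have property P. Define $$B_2=3\cdot\big(A\cap(\tfrac n9,\tfrac n6]\big)\ \cup\ 2\cdot\big(A\cap(\tfrac n6,\tfrac n4]\big)\ \cup\ \tfrac32\cdot\big(A\cap2\mathbf{Z}\cap(\tfrac n4,\tfrac n3]\big)\ \cup\ \big(A\cap(1+2\mathbf{Z})\cap(\tfrac n4,\tfrac n3]\big)\ \cup\ \big(A\cap(\tfrac n3,\tfrac n2]\big)\subset\left(\tfrac n4,\tfrac n2\right],$$ and $B_2^{\mathrm R}=B_2\cap(\frac n3,\frac n2]$. Writing $A_{(\frac23,1]}=A\cap(\frac{2n}{3},n]$, at least one of the following holds: $$2|B_2^{\mathrm R}|+|A_{(\frac23,1]}|\leqslant\frac n3+4,\qquad\text{or}\qquad |B_2|+|A_{(\frac23,1]}|\leqslant\frac n4+4.$$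
   Context: A set $A\subset\mathbf{N}$ has property P if there are no $x,y,z\in A$ (not necessarily distinct $x,y$) with $z<x$, $z<y$ and $z\mid x+y$. Intervals denote sets of integers; $q\cdot X=\{qx:x\in X\}$. *)

From mathcomp Require Import all_boot.
Set Implicit Arguments. Unset Strict Implicit. Unset Printing Implicit Defensive.

Definition propP (A : pred nat) : Prop :=
  forall x y z, A x -> A y -> A z -> z < x -> z < y -> ~~ (z %| x + y).

(* Number of elements of S lying in [0, n] (all sets considered are in [n]). *)
Definition cardUpTo (n : nat) (S : pred nat) : nat := count S (iota 0 n.+1).

(* B_2 = 3.(A ∩ (n/9, n/6]) ∪ 2.(A ∩ (n/6, n/4]) ∪ (3/2).(A ∩ 2Z ∩ (n/4, n/3])
         ∪ (A ∩ (1+2Z) ∩ (n/4, n/3]) ∪ (A ∩ (n/3, n/2]).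
   Rational bounds are cleared: n/9 < x <-> n < 9x, x <= n/6 <-> 6x <= n, etc. *)
Definition B2 (n : nat) (A : pred nat) : pred nat := fun y =>
  [|| has (fun x => [&& A x, n < 9 * x, 6 * x <= n & y == 3 * x]) (iota 0 n.+1),
      has (fun x => [&& A x, n < 6 * x, 4 * x <= n & y == 2 * x]) (iota 0 n.+1),
      has (fun x => [&& A x, ~~ odd x, n < 4 * x, 3 * x <= n & 2 * y == 3 * x])
          (iota 0 n.+1),
      [&& A y, odd y, n < 4 * y & 3 * y <= n]
    | [&& A y, n < 3 * y & 2 * y <= n]].

Definition B2R (n : nat) (A : pred nat) : pred nat := fun y =>
  [&& B2 n A y, n < 3 * y & 2 * y <= n].

Definition Atop (n : nat) (A : pred nat) : pred nat := fun y =>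
  [&& A y, 2 * n < 3 * y & y <= n].

From mathcomp Require Import all_boot zify.
Set Implicit Arguments. Unset Strict Implicit. Unset Printing Implicit Defensive.

(* Every y in B_2 has a witness g in A with g | 2y and g <= y <= n/2.  Since
   g is below every element of A_(2/3,1], property P forbids two elements of
   A_(2/3,1] summing to 4y; and for the odd y of A in (n/4, n/3] (the part of
   B_2 outside (n/3, n/2]) it forbids two of them summing to 6y.  So B_2^R
   shares (n/3, n/2] with the quarter-sums of A_(2/3,1], and B_2 \ B_2^R
   shares the odd numbers of (n/4, n/3] with its sixth-sums.  Even t give the
   quarter-sums t/2.  If the odd t meet both odd classes mod 4, pairing each
   class with an extreme element of the other gives |odd| - 1 more
   quarter-sums; otherwise the odd t above 3n/4 give sixth-sums (t/3 when
   3 | t, and pairings across the classes 1, 2 mod 3), while the remaining odd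
   t are sparse.  Comparing with the sizes of the intervals gives one of the
   two inequalities. *)

Lemma count_predIC (T : Type) (a b : pred T) (s : seq T) :
  count a s = count (fun x => a x && b x) s + count (fun x => a x && ~~ b x) s.
Proof. by elim: s => //= x s ->; case: (a x); case: (b x) => /=; lia. Qed.

Lemma count_mod3_split (a : pred nat) (s : seq nat) :
  count a s = count (fun t => a t && (t %% 3 == 0)) s
            + count (fun t => a t && (t %% 3 == 1)) s
            + count (fun t => a t && (t %% 3 == 2)) s.
Proof.
elim: s => //= t s ->; case: (a t) => /=; last lia.
have : t %% 3 < 3 by rewrite ltn_mod.
by case: (t %% 3) => [|[|[|]]] //= _; lia.
Qed.

Lemma count_disjoint (T : Type) (P Q R : pred T) (s : seq T) :
  (forall x, P x -> R x) -> (forall x, Q x -> R x) -> (forall x, P x -> ~~ Q x) ->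
  count P s + count Q s <= count R s.
Proof.
move=> PR QR PnQ; elim: s => //= x s IH.
case Px: (P x); first by rewrite (negbTE (PnQ x Px)) (PR x Px) /=; lia.
by case Qx: (Q x); rewrite ?(QR x Qx) /=; lia.
Qed.

Lemma count_iota_inj (P Q : pred nat) (f : nat -> nat) N K :
  {in P &, injective f} -> (forall x, P x -> x < N -> Q (f x) && (f x < K)) ->
  count P (iota 0 N) <= count Q (iota 0 K).
Proof.
move=> f_inj fPQ; rewrite -!size_filter -(size_map f); apply: uniq_leq_size.
  rewrite map_inj_in_uniq ?filter_uniq ?iota_uniq //.
  by move=> x y; rewrite !mem_filter => /andP[Px _] /andP[Py _]; apply: f_inj.
move=> z /mapP[x]; rewrite mem_filter mem_iota => /andP[Px /andP[_ xN]] ->.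
by have /andP[Qfx fxK] := fPQ x Px xN; rewrite mem_filter Qfx mem_iota.
Qed.

Lemma count_congr_interval (P : pred nat) m lo hi N : 0 < m ->
  (forall x y, P x -> P y -> x %% m = y %% m) -> (forall x, P x -> lo <= x <= hi) ->
  count P (iota 0 N) <= (hi - lo) %/ m + 1.
Proof.
move=> m_gt0 Pcongr Prange.
rewrite -[_ + 1](size_iota 0) -count_predT.
apply: (count_iota_inj (f := fun x => (x - lo) %/ m)).
  move=> x y Px Py /= eq_div.
  have /andP[lo_x _] := Prange x Px; have /andP[lo_y _] := Prange y Py.
  have eq_mod : (x - lo) %% m = (y - lo) %% m.
    by apply/eqP; rewrite -(eqn_modDr lo) !subnK // (Pcongr x y Px Py).
  suff : x - lo = y - lo by lia.
  by rewrite (divn_eq (x - lo) m) (divn_eq (y - lo) m) eq_div eq_mod.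
move=> x Px _ /=; have /andP[_ x_hi] := Prange x Px.
by rewrite addn1 ltnS leq_div2r // leq_sub2r.
Qed.

(* |X + Y| >= |X| + |Y| - 1: the sums x + max Y and min X + y (y < max Y) are
   pairwise distinct. *)
Lemma count_sumset (X Y S : pred nat) (f : nat -> nat) N K :
  (exists x, X x) -> (exists y, Y y) -> (forall y, Y y -> y < N) ->
  (forall x y x' y', X x -> Y y -> X x' -> Y y' ->
     f (x + y) = f (x' + y') -> x + y = x' + y') ->
  (forall x y, X x -> Y y -> S (f (x + y)) && (f (x + y) < K)) ->
  count X (iota 0 N) + count Y (iota 0 N) <= (count S (iota 0 K)).+1.
Proof.
move=> exX exY Y_lt f_inj fXY.
have [m Xm m_min] := ex_minnP exX.
have [M YM M_max] := ex_maxnP exY (fun y Yy => ltnW (Y_lt y Yy)).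
set ys := filter Y (iota 0 N).
have ys_uniq : uniq ys by rewrite filter_uniq ?iota_uniq.
have M_ys : M \in ys by rewrite mem_filter YM mem_iota Y_lt.
set s1 := [seq f (x + M) | x <- filter X (iota 0 N)].
set s2 := [seq f (m + y) | y <- rem M ys].
have -> : count Y (iota 0 N) = (size s2).+1.
  rewrite size_map size_rem // prednK ?size_filter //.
  by rewrite -has_count; apply/hasP; exists M; rewrite ?mem_iota ?Y_lt.
rewrite addnS ltnS -!size_filter -(size_map (fun x => f (x + M))) -size_cat -/s1.
apply: uniq_leq_size.
  rewrite cat_uniq; apply/and3P; split.
  - rewrite map_inj_in_uniq ?filter_uniq ?iota_uniq //.
    move=> x x'; rewrite !mem_filter => /andP[Xx _] /andP[Xx' _] e.
    by have := f_inj _ _ _ _ Xx YM Xx' YM e; lia.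
  - apply/hasPn => z /mapP[y]; rewrite mem_rem_uniq // inE mem_filter.
    move=> /and3P[yM Yy _] ->; apply/negP => /mapP[x]; rewrite mem_filter.
    move=> /andP[Xx _] e; have := f_inj _ _ _ _ Xm Yy Xx YM e.
    by have := m_min x Xx; have := M_max y Yy; move: yM; case: eqP => //; lia.
  - rewrite map_inj_in_uniq ?rem_uniq //.
    move=> y y'; rewrite !mem_rem_uniq // !inE !mem_filter.
    move=> /and3P[_ Yy _] /and3P[_ Yy' _] e.
    by have := f_inj _ _ _ _ Xm Yy Xm Yy' e; lia.
move=> z; rewrite mem_cat mem_filter mem_iota add0n => /orP[] /mapP[x].
  by rewrite mem_filter => /andP[Xx _] ->; have /andP[-> ->] := fXY x M Xx YM.
by rewrite mem_rem_uniq // inE mem_filter => /and3P[_ Yx _] ->;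
   have /andP[-> ->] := fXY m x Xm Yx.
Qed.

Lemma congr_dichotomy (P : pred nat) m N : (forall x, P x -> x < N) ->
  (exists x y, [/\ P x, P y & x %% m != y %% m]) \/
  (forall x y, P x -> P y -> x %% m = y %% m).
Proof.
move=> P_lt; set s := iota 0 N.
have P_s x : P x -> x \in s by rewrite mem_iota => /P_lt ->.
case: (boolP (has (fun x => has (fun y => [&& P x, P y & x %% m != y %% m]) s) s)).
  by case/hasP=> x _ /hasP[y _ /and3P[Px Py xy]]; left; exists x, y.
move/hasPn=> h; right=> x y Px Py; apply/eqP.
have /hasPn/(_ y (P_s y Py)) := h x (P_s x Px).
by rewrite Px Py /= negbK.
Qed.

Definition rangeR n s := (n < 3 * s) && (2 * s <= n).
Definition odd_rangeL n s := [&& odd s, n < 4 * s & 3 * s <= n].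
Definition top_sum n A k s :=
  has (fun t => Atop n A t && Atop n A (k * s - t)) (iota 0 n.+1).

Lemma B2_witness n A y : B2 n A y -> exists g, [/\ A g, g %| 2 * y & g <= y].
Proof.
case/or4P => [/hasP[x _ /and4P[Ax _ _ /eqP->]] | /hasP[x _ /and4P[Ax _ _ /eqP->]]
  | /hasP[x _ /and5P[Ax _ _ _ /eqP e]] | /orP[/and4P[Ay _ _ _] | /and3P[Ay _ _]]].
- by exists x; split; rewrite // ?leq_pmull // (mulnA 2 3) dvdn_mull.
- by exists x; split; rewrite // ?leq_pmull // (mulnA 2 2) dvdn_mull.
- by exists x; split; rewrite ?e ?dvdn_mull //; lia.
- by exists y; split; rewrite ?dvdn_mull.
- by exists y; split; rewrite ?dvdn_mull.
Qed.

Lemma B2_notin_rangeR n A y : B2 n A y -> ~~ rangeR n y -> A y && odd_rangeL n y.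
Proof.
rewrite /rangeR /odd_rangeL negb_and -leqNgt -ltnNge => + out.
case/or4P => [/hasP[x _ /and4P[_ ? ? /eqP?]] | /hasP[x _ /and4P[_ ? ? /eqP?]]
  | /hasP[x _ /and5P[_ _ ? ? /eqP?]] | /orP[// | /and3P[_ ? ?]]];
  by case/orP: out; lia.
Qed.

Section SumsOfTop.
Variables (n : nat) (A : pred nat).

Local Notation card := (cardUpTo n).
Local Notation T := (Atop n A).
Local Notation S4 := (fun s => rangeR n s && top_sum n A 4 s).
Local Notation S6 := (fun s => odd_rangeL n s && top_sum n A 6 s).
Local Notation Todd := (fun t => T t && odd t).
Local Notation Thigh := (fun t => Todd t && (3 * n < 4 * t)).

Section PropertyP.
Hypothesis hP : propP A.

Lemma top_sum_free k s g : A g -> g %| k * s -> 3 * g <= 2 * n -> ~~ top_sum n A k s.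
Proof.
move=> Ag g_ks g_small; apply/hasPn => t _.
apply/negP => /andP[/and3P[At t_gt _] /and3P[At' t'_gt _]].
have := hP At At' Ag; rewrite subnKC ?g_ks; lia.
Qed.

Lemma card_B2R_S4 : card (B2R n A) + card S4 <= card (rangeR n).
Proof.
apply: count_disjoint => [y /and3P[_ y_gt y_le] | y /andP[] // | y /and3P[By _ y_le]].
  by rewrite /rangeR y_gt y_le.
have [g [Ag g_2y g_y]] := B2_witness By.
rewrite negb_and orbC (top_sum_free Ag) //; last lia.
by rewrite -[4]/(2 * 2) -mulnA dvdn_mull.
Qed.

Lemma card_B2L_S6 : card (fun y => B2 n A y && ~~ rangeR n y) + card S6 <= card (odd_rangeL n).
Proof.
apply: count_disjoint => [y /andP[By /(B2_notin_rangeR By) /andP[_ //]] | y /andP[] //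
  | y /andP[By /(B2_notin_rangeR By) /andP[Ay /and3P[_ _ y_le]]]].
by rewrite negb_and orbC (top_sum_free Ay) ?dvdn_mull //; lia.
Qed.

End PropertyP.

Lemma top_sumP k s t : T t -> T (k * s - t) -> top_sum n A k s.
Proof. by move=> Tt Tt'; apply/hasP; exists t; rewrite ?Tt ?mem_iota //; case/and3P: Tt; lia. Qed.

Lemma card_rangeR : card (rangeR n) <= n %/ 2 - (n %/ 3).+1 + 1.
Proof.
rewrite -[_ - _]divn1; apply: count_congr_interval => // [x y _ _ | x /andP[? ?]].
  by rewrite !modn1.
by apply/andP; split; lia.
Qed.

Lemma card_odd_rangeL : card (odd_rangeL n) <= (n %/ 3 - (n %/ 4).+1) %/ 2 + 1.
Proof.
apply: count_congr_interval => // [x y /and3P[ox _ _] /and3P[oy _ _] | x /and3P[_ ? ?]].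
  by rewrite !modn2 ox oy.
by apply/andP; split; lia.
Qed.

Lemma card_top : card T <= n - (2 * n %/ 3).+1 + 1.
Proof.
rewrite -[_ - _]divn1; apply: count_congr_interval => // [x y _ _ | x /and3P[_ ? ?]].
  by rewrite !modn1.
by apply/andP; split; lia.
Qed.

Lemma card_top_even : card (fun t => T t && ~~ odd t) <= card S4.
Proof.
apply: (count_iota_inj (f := fun t => t %/ 2)) => [x y /andP[_ ox] /andP[_ oy] /= e | x].
  by move: (modn2 x) (modn2 y); rewrite (negbTE ox) (negbTE oy); lia.
move=> /andP[Tx ox] _; have := modn2 x; rewrite (negbTE ox) /= => x_even.
have /and3P[_ ? ?] := Tx; rewrite /= /rangeR (@top_sumP _ _ x) //; last first.
  by rewrite (_ : 4 * _ - x = x) //; lia.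
by rewrite andbT; apply/andP; split; [apply/andP; split|]; lia.
Qed.

Lemma card_top_odd_mixed :
  (exists x y, [/\ Todd x, Todd y & x %% 4 != y %% 4]) -> card Todd <= (card S4).+1.
Proof.
move=> [x0 [y0 [Tx0 Ty0 x0y0]]].
rewrite /cardUpTo (count_predIC _ (fun t => t %% 4 == x0 %% 4)).
apply: (count_sumset (f := fun z => z %/ 4)).
- by exists x0; rewrite /= Tx0 eqxx.
- by exists y0; rewrite /= Ty0 eq_sym.
- by move=> y /andP[/andP[/and3P[_ _ ?] _] _]; lia.
- move=> x y x' y' /andP[/andP[_ ox] /eqP x4] /andP[/andP[_ oy] y4]
         /andP[/andP[_ ox'] /eqP x4'] /andP[/andP[_ oy'] y4'].
  move: (modn2 x) (modn2 y) (modn2 x') (modn2 y') y4 y4'.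
  by rewrite ox oy ox' oy'; lia.
move=> x y /andP[/andP[Tx ox] /eqP x4] /andP[/andP[Ty oy] y4].
have /and3P[_ ? ?] := Tx; have /and3P[_ ? ?] := Ty.
move: (modn2 x) (modn2 y) y4; rewrite ox oy => x2 y2 /eqP y4.
have sum4 : (x + y) %% 4 = 0 by lia.
rewrite /= /rangeR (@top_sumP _ _ x) //; last by rewrite (_ : 4 * _ - x = y) //; lia.
by rewrite andbT; apply/andP; split; lia.
Qed.

Section OddTopOneClass.
Hypothesis same4 : forall x y, Todd x -> Todd y -> x %% 4 = y %% 4.

Let Thigh_mod3 k t := Thigh t && (t %% 3 == k).

Lemma card_top_odd_low :
  card (fun t => Todd t && ~~ (3 * n < 4 * t)) <= (3 * n %/ 4 - (2 * n %/ 3).+1) %/ 4 + 1.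
Proof.
apply: count_congr_interval => // [x y /andP[Ox _] /andP[Oy _] | x].
  exact: same4.
by rewrite -leqNgt => /andP[/andP[/and3P[_ ? ?] _] ?]; apply/andP; split; lia.
Qed.

Lemma card_top_odd_high_class k :
  card (Thigh_mod3 k) <= (n - (3 * n %/ 4).+1) %/ 12 + 1.
Proof.
apply: count_congr_interval => // [x y /andP[/andP[Ox _] /eqP xk] /andP[/andP[Oy _] /eqP yk]
  | x /andP[/andP[/andP[/and3P[_ ? ?] _] ?] _]].
  by have := same4 Ox Oy; lia.
by apply/andP; split; lia.
Qed.

Lemma card_top_odd_high_mod3_0 : card (Thigh_mod3 0) <= card S6.
Proof.
apply: (count_iota_inj (f := fun t => t %/ 3)) => [x y /andP[_ /eqP x3] /andP[_ /eqP y3] /= e | x].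
  by lia.
move=> /andP[/andP[/andP[Tx ox] ?] /eqP x3] _; have /and3P[_ ? ?] := Tx.
have := modn2 x; rewrite ox => x2.
have o3 : odd (x %/ 3) by move: (modn2 (x %/ 3)); case: odd => //=; lia.
rewrite /= /odd_rangeL o3 (@top_sumP _ _ x) //; last by rewrite (_ : 6 * _ - x = x) //; lia.
by rewrite andbT; apply/andP; split; [apply/andP; split|]; lia.
Qed.

Lemma card_top_odd_high_mod3_12 :
  0 < card (Thigh_mod3 1) -> 0 < card (Thigh_mod3 2) ->
  card (Thigh_mod3 1) + card (Thigh_mod3 2) <= (card S6).+1.
Proof.
rewrite /cardUpTo -!has_count => /hasP[x0 _ X0] /hasP[y0 _ Y0].
apply: (count_sumset (f := fun z => z %/ 6)); first (by exists x0); first (by exists y0).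
- by move=> y /andP[/andP[/andP[/and3P[_ _ ?] _] _] _]; lia.
- move=> x y x' y' /andP[/andP[/andP[_ ox] _] /eqP x3] /andP[/andP[/andP[_ oy] _] /eqP y3]
         /andP[/andP[/andP[_ ox'] _] /eqP x3'] /andP[/andP[/andP[_ oy'] _] /eqP y3'].
  by move: (modn2 x) (modn2 y) (modn2 x') (modn2 y'); rewrite ox oy ox' oy'; lia.
move=> x y /andP[/andP[Ox ?] /eqP x3] /andP[/andP[Oy ?] /eqP y3].
have xy4 := same4 Ox Oy; case/andP: Ox => Tx ox; case/andP: Oy => Ty oy.
have /and3P[_ ? ?] := Tx; have /and3P[_ ? ?] := Ty.
move: (modn2 x) (modn2 y); rewrite ox oy => x2 y2.
(* x and y are odd and congruent mod 4, so x + y = 2 mod 4. *)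
have o6 : odd ((x + y) %/ 6) by move: (modn2 ((x + y) %/ 6)); case: odd => //=; lia.
rewrite /= /odd_rangeL o6 (@top_sumP _ _ x) //; last by rewrite (_ : 6 * _ - x = y) //; lia.
by rewrite andbT; apply/andP; split; [apply/andP; split|]; lia.
Qed.

Lemma card_top_odd_high : card Thigh <= card S6 + (n - (3 * n %/ 4).+1) %/ 12 + 2.
Proof.
have split3 :
    card Thigh = card (Thigh_mod3 0) + card (Thigh_mod3 1) + card (Thigh_mod3 2).
  exact: count_mod3_split.
have c0_S6 := card_top_odd_high_mod3_0.
have c0 := card_top_odd_high_class 0.
have c1 := card_top_odd_high_class 1; have c2 := card_top_odd_high_class 2.
case: (posnP (card (Thigh_mod3 1))) => [| p1]; first lia.
case: (posnP (card (Thigh_mod3 2))) => [| p2]; first lia.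
by have := card_top_odd_high_mod3_12 p1 p2; lia.
Qed.

End OddTopOneClass.

End SumsOfTop.

Theorem mainTheorem14 (n : nat) (A : pred nat) :
  (forall x, A x -> 1 <= x <= n) ->
  propP A ->
  3 * (2 * cardUpTo n (B2R n A) + cardUpTo n (Atop n A)) <= n + 12 \/
  4 * (cardUpTo n (B2 n A) + cardUpTo n (Atop n A)) <= n + 16.
Proof.
move=> _ hP.
have split_B2 : cardUpTo n (B2 n A)
    = cardUpTo n (B2R n A) + cardUpTo n (fun y => B2 n A y && ~~ rangeR n y).
  exact: count_predIC.
have split_top : cardUpTo n (Atop n A) = cardUpTo n (fun t => Atop n A t && odd t)
    + cardUpTo n (fun t => Atop n A t && ~~ odd t).
  exact: count_predIC.
have := card_B2R_S4 n hP; have := card_B2L_S6 n hP.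
have := card_rangeR n; have := card_odd_rangeL n; have := card_top n A; have := card_top_even n A.
have Todd_lt t : Atop n A t && odd t -> t < n.+1 by case/andP=> /and3P[_ _ ?]; lia.
case: (congr_dichotomy 4 Todd_lt) => [mixed | same4].
  by have := card_top_odd_mixed mixed; lia.
have : cardUpTo n (fun t => Atop n A t && odd t)
    = cardUpTo n (fun t => (Atop n A t && odd t) && (3 * n < 4 * t))
    + cardUpTo n (fun t => (Atop n A t && odd t) && ~~ (3 * n < 4 * t)).
  exact: count_predIC.
have := card_top_odd_low same4; have := card_top_odd_high same4.
lia.
Qed.
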